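(* Let $G=(V,E)$ be a finite multigraph and suppose the vertices $v\neq w\in V$ form a 3-connection in $G$, i.e. $\lambda_G(v,w)\ge3$. If a partition $\pi$ of $V$ is such that the quotient $G^\pi$ is a cactus, then $v$ and $w$ lie in the same block of $\pi$.
   Context: $\lambda_G(v,w)$ is the minimal number of edges whose deletion disconnects $v$ and $w$ (equivalently the maximal number of edge-disjoint paths between them). $G^\pi$ identifies the vertices in each block of $\pi$. A cactus is a connected multigraph in which every edge belongs to exactly one simple cycle (loops and pairs of parallel edges count as cycles). *)

From mathcomp Require Import all_boot.
Set Implicit Arguments. Unset Strict Implicit. Unset Printing Implicit Defensive.

(* A finite multigraph: finite vertex type V, finite edge type E, and an
   endpoint map ends : E -> V * V (loops = edges with equal endpoints,
   parallel edges = distinct edges with the same endpoints). *)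

Section MGraph.
Variables (V E : finType) (ends : E -> V * V).

Definition joins (e : E) (x y : V) : bool :=
  (ends e == (x, y)) || (ends e == (y, x)).

Definition adj_avoid (F : {set E}) : rel V :=
  fun x y => [exists e, (e \notin F) && joins e x y].

Definition edge_conn_ge (k : nat) (v w : V) : Prop :=
  forall F : {set E}, #|F| < k -> connect (adj_avoid F) v w.

Definition mconnected : Prop :=
  forall x y : V, connect (adj_avoid set0) x y.

(* C is the edge set of a simple cycle: a closed walk
   vs_0 -es_0- vs_1 - ... - vs_{k-1} -es_{k-1}- vs_0 with k >= 1,
   distinct vertices and distinct edges (loops: k = 1; pairs of parallel
   edges: k = 2). *)
Definition is_cycle_edgeset (C : {set E}) : Prop :=
  exists (vs : seq V) (es : seq E),
    [/\ 0 < size vs, size es = size vs, uniq vs && uniq es,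
        all (fun p => joins p.2 p.1.1 p.1.2) (zip (zip vs (rot 1 vs)) es)
      & C = [set e in es]].

Definition cactus : Prop :=
  mconnected /\
  forall e : E, exists! C : {set E}, is_cycle_edgeset C /\ e \in C.

End MGraph.

(* quotient G^pi, where the partition pi of V is given by the fibres of a
   surjection f : V -> K (blocks indexed by K); edges are kept. *)
Definition quot_ends (V E K : finType) (ends : E -> V * V) (f : V -> K) :
  E -> K * K := fun e => (f (ends e).1, f (ends e).2).

From mathcomp Require Import all_boot.
Set Implicit Arguments. Unset Strict Implicit. Unset Printing Implicit Defensive.

(* In a graph where every edge lies on exactly one simple cycle, any two
   distinct vertices x, y are separated by two edges: let e = x c be the first
   edge of a simple x-y path and e' the other edge at x on the cycle through e.
   A path from x to c avoiding e and e' would close, together with e, a second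
   simple cycle through e, so {e, e'} separates x from c; the rest of the x-y
   path avoids x, hence e and e', so {e, e'} also separates x from y.
   Quotienting by a partition keeps all edges, so it cannot decrease edge
   connectivity; if v and w were in different blocks, the cactus G^pi would
   have two blocks joined by 3 edge-disjoint paths. *)

Section Multigraph.
Variables (V E : finType) (ends : E -> V * V).
Implicit Types (F C : {set E}) (e g : E) (a c x y u : V).

Local Notation joins := (joins ends).
Local Notation adj_avoid := (adj_avoid ends).
Local Notation is_cycle_edgeset := (is_cycle_edgeset ends).

Lemma joinsC e x y : joins e x y = joins e y x.
Proof. by rewrite /joins orbC. Qed.

Lemma joins_ends e x y x' y' : joins e x y -> joins e x' y' ->
  (x = x' /\ y = y') \/ (x = y' /\ y = x').
Proof.
by rewrite /joins => /orP[/eqP->|/eqP->] /orP[/eqP[->->]|/eqP[->->]]; auto.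
Qed.

Lemma adj_avoid_sym F : symmetric (adj_avoid F).
Proof.
move=> x y; apply/existsP/existsP => -[e e_xy]; exists e.
  by rewrite -joinsC.
by rewrite joinsC.
Qed.

Lemma adj_avoid_off F x u u' : {in F, forall g, exists d, joins g x d} ->
  u != x -> u' != x -> adj_avoid set0 u u' -> adj_avoid F u u'.
Proof.
move=> F_at_x ux u'x /existsP[g /andP[_ g_uu']]; apply/existsP; exists g.
rewrite g_uu' andbT; apply/negP => /F_at_x[d g_xd].
case: (joins_ends g_uu' g_xd) => [[u_x _]|[_ u'_x]].
  by rewrite u_x eqxx in ux.
by rewrite u'_x eqxx in u'x.
Qed.

(* The fourth conjunct only serves to make [uniq gs] go through the induction. *)
Lemma simple_path_edges F x p y e0 :
  path (adj_avoid F) x p -> uniq (x :: p) -> joins e0 (last x p) y ->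
  exists gs : seq E, [/\ size gs = size p, {subset gs <= ~: F}, uniq gs,
    {in gs, forall g, ((ends g).1 \in x :: p) && ((ends g).2 \in x :: p)}
  & all (fun q => joins q.2 q.1.1 q.1.2)
        (zip (zip (x :: p) (rcons p y)) (rcons gs e0))].
Proof.
elim: p x => [|z p IHp] x /=.
  by move=> _ _ e0_xy; exists [::]; rewrite /= e0_xy.
move=> /andP[/existsP[g /andP[gF g_xz]] path_p] /andP[x_notin uniq_p] e0_last.
have [gs [size_gs gsF uniq_gs gs_in gs_joins]] := IHp z path_p uniq_p e0_last.
have g_ends : ends g = (x, z) \/ ends g = (z, x).
  by case/orP: g_xz => /eqP->; [left | right].
exists (g :: gs); split=> /=; rewrite ?size_gs ?g_xz ?gs_joins //.
- by move=> g'; rewrite inE => /orP[/eqP->|/gsF]; rewrite ?inE.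
- rewrite uniq_gs andbT; apply/negP => /gs_in.
  by case: g_ends => -> /andP[] /=; rewrite (negPf x_notin) ?andbF.
- move=> g'; rewrite inE => /orP[/eqP->|/gs_in /andP[g'1 g'2]].
    by case: g_ends => -> /=; rewrite !inE !eqxx ?orbT.
  by rewrite !(mem_behead (s := x :: z :: p)).
Qed.

Lemma simple_path_close_cycle F x p e :
  path (adj_avoid F) x p -> uniq (x :: p) -> joins e (last x p) x -> e \in F ->
  exists2 C, is_cycle_edgeset C & (e \in C) && (C \subset e |: ~: F).
Proof.
move=> path_p uniq_p e_close eF.
have [gs [size_gs gsF uniq_gs _ gs_joins]] :=
  simple_path_edges path_p uniq_p e_close.
have e_notin : e \notin gs by apply: contraL eF => /gsF; rewrite inE.
exists [set g in rcons gs e].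
  exists (x :: p), (rcons gs e); split=> //.
  - by rewrite size_rcons size_gs.
  - by rewrite uniq_p rcons_uniq e_notin uniq_gs.
  - by rewrite rot1_cons.
rewrite inE mem_rcons mem_head /=; apply/subsetP => g.
rewrite inE mem_rcons inE => /orP[/eqP->|/gsF g_notF]; first exact: setU11.
by rewrite setU1r.
Qed.

Lemma cycle_edge_at vs es e0 u : size es = size vs ->
  all (fun q => joins q.2 q.1.1 q.1.2) (zip (zip vs (rot 1 vs)) es) ->
  u \in vs -> joins (nth e0 es (index u vs)) u (next vs u).
Proof.
move=> size_es es_joins u_vs; set i := index u vs.
have i_lt : i < size vs by rewrite index_mem.
have := all_nthP ((u, u), e0) es_joins i.
rewrite !size_zip size_rot size_es !minnn nth_zip ?size_zip ?size_rot ?minnn //.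
rewrite nth_zip ?size_rot //= nth_index // => /(_ i_lt).
case: vs u_vs @i i_lt {size_es es_joins} => // y p u_vs i i_lt.
rewrite next_nth u_vs rot1_cons (set_nth_default y) ?size_rcons //.
by rewrite nth_rcons_default.
Qed.

Lemma cycle_adjacent_edge C e a c :
  is_cycle_edgeset C -> e \in C -> joins e a c -> a != c ->
  exists e', [/\ e' \in C, e' != e & exists d, joins e' a d].
Proof.
case=> vs [es [_ size_es /andP[uniq_vs uniq_es] es_joins ->]].
rewrite inE => e_es e_ac ac.
pose out x := nth e es (index x vs).
have out_joins x : x \in vs -> joins (out x) x (next vs x).
  exact: cycle_edge_at.
have out_in x : x \in vs -> out x \in [set g in es].
  by move=> x_vs; rewrite inE mem_nth // size_es index_mem.
have out_inj : {in vs &, injective out}.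
  move=> x x' x_vs x'_vs /eqP; rewrite nth_uniq ?size_es ?index_mem //.
  by move/eqP/index_inj; apply.
pose u := nth a vs (index e es).
have u_vs : u \in vs by rewrite mem_nth // -size_es index_mem.
have out_u : out u = e.
  by rewrite /out index_uniq ?nth_index // -size_es index_mem.
have e_u_next : joins e u (next vs u) by rewrite -out_u out_joins.
have next_u : next vs u != u.
  apply: contraNneq ac => uu; rewrite uu in e_u_next.
  by case: (joins_ends e_ac e_u_next) => -[-> ->].
have next_vs : next vs u \in vs by rewrite mem_next.
have prev_vs : prev vs u \in vs by rewrite mem_prev.
case: (joins_ends e_ac e_u_next) => -[-> _].
- have prev_u : prev vs u != u.
    by apply: contraNneq next_u => {1}<-; rewrite next_prev.
  exists (out (prev vs u)); split; first exact: out_in.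
    by rewrite -out_u (inj_in_eq out_inj).
  exists (prev vs u); rewrite joinsC.
  by have := out_joins _ prev_vs; rewrite next_prev.
- exists (out (next vs u)); split; first exact: out_in.
    by rewrite -out_u (inj_in_eq out_inj).
  by exists (next vs (next vs u)); apply: out_joins.
Qed.

Lemma unique_cycle_edge_cut C e e' a c :
  (exists! C, is_cycle_edgeset C /\ e \in C) ->
  is_cycle_edgeset C -> e \in C -> e' \in C -> e' != e -> joins e a c ->
  ~~ connect (adj_avoid [set e; e']) a c.
Proof.
move=> [C0 [_ C0_uniq]] C_cycle eC e'C e'e e_ac.
apply/negP => /connectP[p path_p c_last].
case: (shortenP path_p) c_last => q path_q uniq_q _ q_last.
have e_close : joins e (last a q) a by rewrite -q_last joinsC.
have [C' C'_cycle /andP[eC' C'_sub]] :=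
  simple_path_close_cycle path_q uniq_q e_close (setU11 e [set e']).
have C'C : C' = C.
  by rewrite -(C0_uniq _ (conj C'_cycle eC')) (C0_uniq _ (conj C_cycle eC)).
move: e'C; rewrite -C'C => /(subsetP C'_sub).
by rewrite !inE (negPf e'e) eqxx orbT.
Qed.

Lemma unique_cycles_not_edge_conn3 x y :
  (forall e, exists! C, is_cycle_edgeset C /\ e \in C) ->
  x != y -> ~ edge_conn_ge ends 3 x y.
Proof.
move=> cycle_uniq xy conn3.
have /connectP[p0 path_p0 y_last] : connect (adj_avoid set0) x y.
  by apply: conn3; rewrite cards0.
case: (shortenP path_p0) y_last => -[|c p] /=.
  by move=> _ _ _ y_x; rewrite y_x eqxx in xy.
move=> /andP[/existsP[e /andP[_ e_xc]] path_p] /andP[x_notin _] _ y_last.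
have xc : x != c by apply: contraNneq x_notin => ->; rewrite mem_head.
have [C [[C_cycle eC] _]] := cycle_uniq e.
have [e' [e'C e'e e'_at_x]] := cycle_adjacent_edge C_cycle eC e_xc xc.
have cut_xc := unique_cycle_edge_cut (cycle_uniq e) C_cycle eC e'C e'e e_xc.
have x_y : connect (adj_avoid [set e; e']) x y.
  by apply: conn3; rewrite cards2 !ltnS leq_b1.
have c_y : connect (adj_avoid [set e; e']) c y.
  apply/connectP; exists p => //.
  apply: (sub_in_path (P := predC1 x)) path_p; last first.
    by apply/allP => z z_cp /=; apply: contraNneq x_notin => <-.
  move=> z z' /= zx z'x; apply: adj_avoid_off zx z'x => g.
  by rewrite !inE => /orP[]/eqP->; [exists c | exact: e'_at_x].
move: cut_xc; rewrite (connect_trans x_y) //.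
by rewrite (sym_connect_sym (@adj_avoid_sym _)).
Qed.

End Multigraph.

Lemma adj_avoid_quot (V E K : finType) (ends : E -> V * V) (f : V -> K) F :
  {homo f : x y / adj_avoid ends F x y >-> adj_avoid (quot_ends ends f) F x y}.
Proof.
move=> x y /existsP[g /andP[gF g_xy]]; apply/existsP; exists g; rewrite gF /=.
by case/orP: g_xy => /eqP g_xy; rewrite /joins /quot_ends g_xy eqxx ?orbT.
Qed.

Lemma edge_conn_ge_quot (V E K : finType) (ends : E -> V * V) (f : V -> K) k v w :
  edge_conn_ge ends k v w -> edge_conn_ge (quot_ends ends f) k (f v) (f w).
Proof.
move=> conn F F_lt; have /connectP[p path_p ->] := conn F F_lt.
apply/connectP; exists (map f p); last by rewrite last_map.
apply: (homo_path (e := adj_avoid ends F)) path_p => x y.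
exact: adj_avoid_quot.
Qed.

Theorem lemma2p5 (V E : finType) (ends : E -> V * V) (v w : V)
  (K : finType) (f : V -> K) :
  v != w ->
  edge_conn_ge ends 3 v w ->
  (forall k : K, exists x : V, f x = k) ->
  cactus (quot_ends ends f) ->
  f v = f w.
Proof.
move=> _ conn3 _ [_ cycle_uniq]; apply/eqP/negPn/negP => fvw.
exact: unique_cycles_not_edge_conn3 cycle_uniq fvw (edge_conn_ge_quot f conn3).
Qed.
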